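(* Let $(\Omega,\preceq)$ be a pre-ordered set, let $n_1\ge 0$, and let $(t,c)$ and $(t',c')$ be two segments over $\Omega$ with domain $[n_1]$. If there exists a morphism $(t,c)\to(t',c')$ in $\mathbf{Seg}(\Omega\,|\,n_1)$, then it is the only morphism from $(t,c)$ to $(t',c')$ in $\mathbf{Seg}(\Omega)$.
   Context: For $n\ge 1$, $[n]=\{1,\dots,n\}$ with its usual order, and $[0]=\emptyset$. A segment over a pre-ordered set $(\Omega,\preceq)$ is a pair $(t,c)$ where $t:[n_1]\to[n_0]$ is an order-preserving surjection and $c:[n_0]\to\Omega$ is a function; $[n_1]$ is its domain. A morphism of segments $(t,c)\to(t',c')$ (with $t':[n_1']\to[n_0']$, $c':[n_0']\to\Omega$) is a pair $(f_1,f_0)$ with $f_1:[n_1]\to[n_1']$ an order-preserving injection and $f_0:[n_0]\to[n_0']$ order-preserving, such that $t'\circ f_1=f_0\circ t$ and $c'(f_0(i))\preceq c(i)$ for all $i\in[n_0]$; composition is componentwise. This gives the category $\mathbf{Seg}(\Omega)$. The subcategory $\mathbf{Seg}(\Omega\,|\,n_1)$ has as objects the segments with domain $[n_1]$ and as morphisms those morphisms $(f_1,f_0)$ with $f_1=\mathrm{id}_{[n_1]}$. *)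

(* [n] = {1,..,n} is modelled by the ordinal type 'I_n = {0,..,n-1}
   with its usual order (an order isomorphism shifting by one). *)
From mathcomp Require Import all_boot.
Set Implicit Arguments. Unset Strict Implicit. Unset Printing Implicit Defensive.

Definition ord_monotone (m n : nat) (f : 'I_m -> 'I_n) : Prop :=
  forall i j : 'I_m, i <= j -> f i <= f j.

Definition ord_surjective (m n : nat) (f : 'I_m -> 'I_n) : Prop :=
  forall j : 'I_n, exists i : 'I_m, f i = j.

Definition is_segment (Omega : Type) (n1 n0 : nat)
  (t : 'I_n1 -> 'I_n0) (c : 'I_n0 -> Omega) : Prop :=
  ord_monotone t /\ ord_surjective t.

Definition seg_morphism (Omega : Type) (le : Omega -> Omega -> Prop)
  (n1 n0 n1' n0' : nat)
  (t : 'I_n1 -> 'I_n0) (c : 'I_n0 -> Omega)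
  (t' : 'I_n1' -> 'I_n0') (c' : 'I_n0' -> Omega)
  (f1 : 'I_n1 -> 'I_n1') (f0 : 'I_n0 -> 'I_n0') : Prop :=
  [/\ ord_monotone f1, injective f1, ord_monotone f0,
      (forall i : 'I_n1, t' (f1 i) = f0 (t i)) &
      (forall i : 'I_n0, le (c' (f0 i)) (c i))].

From Stdlib Require Import FunctionalExtensionality.
From mathcomp Require Import all_boot.
Set Implicit Arguments. Unset Strict Implicit. Unset Printing Implicit Defensive.

(* The first component of any morphism between segments with domain [n1] is an
   order-preserving injection [n1] -> [n1]; it maps the increasing enumeration
   of [n1] to a strictly increasing permutation of it, hence is the identity.
   The commuting square then reads g0 (t i) = t' i = f0 (t i), and since t is
   surjective this forces g0 = f0. *)

Lemma ord_monotone_inj_homo_ltn (m n : nat) (f : 'I_m -> 'I_n) :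
  ord_monotone f -> injective f -> {homo f : i j / i < j}.
Proof.
move=> f_mono f_inj i j lt_ij.
rewrite ltn_neqAle (f_mono _ _ (ltnW lt_ij)) andbT.
by apply: contraTneq lt_ij => /val_inj/f_inj->; rewrite ltnn.
Qed.

Lemma ord_monotone_inj_id (n : nat) (g : 'I_n -> 'I_n) :
  ord_monotone g -> injective g -> g =1 id.
Proof.
move=> g_mono g_inj.
pose ltI := relpre (@nat_of_ord n) ltn.
have enum_sorted : sorted ltI (enum 'I_n).
  by rewrite -sorted_map val_enum_ord iota_ltn_sorted.
have /eq_in_map g_id : map g (enum 'I_n) = map id (enum 'I_n).
  rewrite map_id; apply: (@irr_sorted_eq _ ltI) => [j k l||||j].
  - exact: ltn_trans.
  - by move=> j; rewrite /ltI /= ltnn.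
  - exact: homo_sorted (ord_monotone_inj_homo_ltn g_mono g_inj) _ enum_sorted.
  - exact: enum_sorted.
  rewrite mem_enum.
  by have /codomP[k ->] := inj_card_onto g_inj (leqnn _) j; rewrite map_f ?mem_enum.
by move=> i; rewrite g_id ?mem_enum.
Qed.

Lemma ord_surjective_cancel (m n : nat) (T : Type) (t : 'I_m -> 'I_n)
    (f g : 'I_n -> T) :
  ord_surjective t -> f \o t =1 g \o t -> f = g.
Proof.
move=> t_surj eq_fg; apply: functional_extensionality => j.
by have [i <-] := t_surj j; exact: eq_fg.
Qed.

Theorem mainTheorem1 (Omega : Type) (le : Omega -> Omega -> Prop)
  (le_refl : forall x, le x x)
  (le_trans : forall x y z, le x y -> le y z -> le x z)
  (n1 n0 n0' : nat)
  (t : 'I_n1 -> 'I_n0) (c : 'I_n0 -> Omega)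
  (t' : 'I_n1 -> 'I_n0') (c' : 'I_n0' -> Omega)
  (Hseg : is_segment t c) (Hseg' : is_segment t' c')
  (f0 : 'I_n0 -> 'I_n0')
  (Hf : seg_morphism le t c t' c' (fun i : 'I_n1 => i) f0) :
  forall (g1 : 'I_n1 -> 'I_n1) (g0 : 'I_n0 -> 'I_n0'),
    seg_morphism le t c t' c' g1 g0 ->
    g1 = (fun i : 'I_n1 => i) /\ g0 = f0.
Proof.
move=> g1 g0 [g1_mono g1_inj _ g_square _].
have g1_id := ord_monotone_inj_id g1_mono g1_inj.
have [_ _ _ f_square _] := Hf.
split; first exact: functional_extensionality.
apply: ord_surjective_cancel Hseg.2 _ => i /=.
by rewrite -g_square -f_square g1_id.
Qed.
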